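(* There exist no positive integers $a,b$ with $1\le a\le b$ such that every nonnegative integer can be written as $ax^2+by^2+5(z^2+zw+w^2)$ with $x,y,z,w\in\mathbb{Z}$. *)

From Stdlib Require Import ZArith.
Open Scope Z_scope.

Definition qform (a b x y z w : Z) : Z :=
  a * x ^ 2 + b * y ^ 2 + 5 * (z ^ 2 + z * w + w ^ 2).

(* The small integers pin the coefficients down. The ternary part
   5 (z^2 + z w + w^2) is either 0 or at least 5, so 1 and 2 must be
   represented by a x^2 + b y^2: this forces a = 1 and b <= 2. For b = 1
   the integer 3 is not a sum of two squares; for b = 2 the integer 10 is
   not represented, because z^2 + z w + w^2 never equals 2 and neither 5
   nor 10 has the shape x^2 + 2 y^2. *)
From Stdlib Require Import ZArith Lia.
Open Scope Z_scope.

(* Splits a hypothesis [lo <= x <= hi] with literal bounds into one goal per value. *)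
Ltac cases_in_range x :=
  match goal with
  | H : ?lo <= x <= ?hi |- _ =>
      let lo' := eval compute in (lo + 1) in
      destruct (Z.eq_dec x lo) as [-> | ?];
      [ clear H
      | first [ lia | assert (lo' <= x <= hi) by lia; clear H; cases_in_range x ] ]
  end.

Lemma sqr_ge1 (x : Z) : x <> 0 -> 1 <= x ^ 2.
Proof. intro; nia. Qed.

Lemma eisenstein_norm_nonneg (z w : Z) : 0 <= z ^ 2 + z * w + w ^ 2.
Proof. nia. Qed.

Lemma eisenstein_norm_neq2 (z w : Z) : z ^ 2 + z * w + w ^ 2 <> 2.
Proof.
  intro E.
  assert (-1 <= w <= 1) by nia; assert (-2 <= z <= 2) by nia.
  cases_in_range w; cases_in_range z; lia.
Qed.

Lemma qform_lt5 (a b x y z w : Z) :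
  0 <= a -> 0 <= b -> qform a b x y z w < 5 ->
  qform a b x y z w = a * x ^ 2 + b * y ^ 2.
Proof.
  unfold qform; intros Ha Hb Hlt.
  pose proof (eisenstein_norm_nonneg z w).
  assert (0 <= a * x ^ 2) by nia; assert (0 <= b * y ^ 2) by nia.
  assert (z ^ 2 + z * w + w ^ 2 = 0) as -> by lia.
  lia.
Qed.

Lemma binary_one_min_coeff (a b x y : Z) :
  1 <= a <= b -> a * x ^ 2 + b * y ^ 2 = 1 -> a = 1.
Proof.
  intros Hab E.
  destruct (Z.eq_dec x 0) as [-> | Hx]; [destruct (Z.eq_dec y 0) as [-> | Hy] |].
  - lia.
  - pose proof (sqr_ge1 y Hy); nia.
  - pose proof (sqr_ge1 x Hx); assert (0 <= b * y ^ 2) by nia; nia.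
Qed.

Lemma sqr_neq2 (x : Z) : x ^ 2 <> 2.
Proof. intro E; assert (-1 <= x <= 1) by nia; cases_in_range x; lia. Qed.

Lemma binary_two_coeff_le2 (b x y : Z) : x ^ 2 + b * y ^ 2 = 2 -> 1 <= b -> b <= 2.
Proof.
  intros E Hb.
  destruct (Z.eq_dec y 0) as [-> | Hy].
  - exfalso; apply (sqr_neq2 x); lia.
  - pose proof (sqr_ge1 y Hy); nia.
Qed.

Lemma sum_two_sqr_neq3 (x y : Z) : x ^ 2 + y ^ 2 <> 3.
Proof.
  intro E.
  assert (-1 <= x <= 1) by nia; assert (-1 <= y <= 1) by nia.
  cases_in_range x; cases_in_range y; lia.
Qed.

Lemma sqr_add_2sqr_neq5_10 (x y : Z) : x ^ 2 + 2 * y ^ 2 <> 5 /\ x ^ 2 + 2 * y ^ 2 <> 10.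
Proof.
  split; intro E;
  assert (-3 <= x <= 3) by nia; assert (-2 <= y <= 2) by nia;
  cases_in_range x; cases_in_range y; lia.
Qed.

Lemma qform_1_1_neq3 (x y z w : Z) : qform 1 1 x y z w <> 3.
Proof.
  intro E; rewrite qform_lt5 in E by lia.
  apply (sum_two_sqr_neq3 x y); lia.
Qed.

Lemma qform_1_2_neq10 (x y z w : Z) : qform 1 2 x y z w <> 10.
Proof.
  unfold qform; intro E.
  pose proof (eisenstein_norm_neq2 z w); pose proof (eisenstein_norm_nonneg z w).
  destruct (sqr_add_2sqr_neq5_10 x y).
  assert (z ^ 2 + z * w + w ^ 2 = 0 \/ z ^ 2 + z * w + w ^ 2 = 1) as [HT | HT] by nia;
  rewrite HT in E; lia.
Qed.

Theorem theorem7p1 :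
  ~ exists a b : Z, 1 <= a /\ a <= b /\
      forall n : Z, 0 <= n ->
        exists x y z w : Z, n = qform a b x y z w.
Proof.
  intros [a [b [Ha [Hab Hrep]]]].
  assert (a = 1) as ->.
  { destruct (Hrep 1 ltac:(lia)) as [x [y [z [w E]]]].
    rewrite qform_lt5 in E by lia.
    apply (binary_one_min_coeff a b x y); lia. }
  assert (Hb : b = 1 \/ b = 2).
  { destruct (Hrep 2 ltac:(lia)) as [x [y [z [w E]]]].
    rewrite qform_lt5 in E by lia.
    enough (b <= 2) by lia.
    apply (binary_two_coeff_le2 b x y); lia. }
  destruct Hb as [-> | ->].
  - destruct (Hrep 3 ltac:(lia)) as [x [y [z [w E]]]].
    now apply (qform_1_1_neq3 x y z w).
  - destruct (Hrep 10 ltac:(lia)) as [x [y [z [w E]]]].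
    now apply (qform_1_2_neq10 x y z w).
Qed.
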